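(* For every integer $m\geq 3$, the graph $C[m]\times P[2]$ is antimagic.
   Context: All graphs are finite, undirected and simple. $C[m]$ denotes the cycle on $m$ vertices and $P[2]$ the path on $2$ vertices (a single edge). The Cartesian product $G_1\times G_2$ of graphs $G_1=(V_1,E_1)$ and $G_2=(V_2,E_2)$ has vertex set $V_1\times V_2$, with $(u_1,u_2)$ adjacent to $(v_1,v_2)$ iff either $u_1=v_1$ and $u_2v_2\in E_2$, or $u_2=v_2$ and $u_1v_1\in E_1$. An antimagic labeling of a graph with $m'$ edges is a bijection $f$ from its edge set to $\{1,\ldots,m'\}$ such that the vertex sums $f^+(v)=\sum_{e\ni v} f(e)$ (sum over edges incident with $v$) are pairwise distinct over all vertices $v$. A graph is antimagic if it admits an antimagic labeling. *)

From mathcomp Require Import all_boot all_order.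
Set Implicit Arguments. Unset Strict Implicit. Unset Printing Implicit Defensive.

(* A finite simple graph is a symmetric irreflexive relation [e] on a finType. *)

Definition edges (T : finType) (e : rel T) : {set {set T}} :=
  [set A : {set T} | [exists x : T, exists y : T, e x y && (A == [set x; y])]].

Definition vsum (T : finType) (e : rel T) (f : {set T} -> nat) (v : T) : nat :=
  \sum_(A in edges e | v \in A) f A.

Definition edge_labeling (T : finType) (e : rel T) (f : {set T} -> nat) : Prop :=
  {in edges e &, injective f} /\
  (forall A, A \in edges e -> 1 <= f A <= #|edges e|).

Definition antimagic_labeling (T : finType) (e : rel T) (f : {set T} -> nat) : Prop :=
  edge_labeling e f /\ injective (vsum e f).

Definition antimagic (T : finType) (e : rel T) : Prop :=
  exists f : {set T} -> nat, antimagic_labeling e f.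

Definition cycle_rel (m : nat) : rel 'I_m :=
  fun i j => (val j == (val i).+1 %% m) || (val i == (val j).+1 %% m).

Arguments cycle_rel : clear implicits.
Definition path2_rel : rel 'I_2 := fun i j => i != j.

Definition cart_prod (T1 T2 : finType) (e1 : rel T1) (e2 : rel T2) : rel (T1 * T2) :=
  fun x y => ((x.1 == y.1) && e2 x.2 y.2) || ((x.2 == y.2) && e1 x.1 y.1).

From mathcomp Require Import all_boot all_order zify.
Set Implicit Arguments. Unset Strict Implicit. Unset Printing Implicit Defensive.

(* Index the edges of the prism C[m] x P[2] on the vertices (i, b), i mod m,
   b in {0, 1}, by rim edges {(i, b), (i + 1, b)} and spokes {(i, 0), (i, 1)}.
   Label the rim edge at (i, b) with i + 1 + 2mb and the spoke at i with m + 1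
   if i = 0 and 2m + 1 - i otherwise: the labels are then 1..m, 2m+1..3m on the
   rims and m+1..2m on the spokes, and the vertex (i, b) receives the sum
   2m + 2 + i + 4mb, which determines (i, b). *)

Section EdgeIndexing.

Variables (T K : finType) (e : rel T) (E : K -> {set T}).
Hypotheses (E_inj : injective E) (edgesE : edges e = [set E k | k : K]).

Variable lab : K -> nat.

Definition edge_lab (A : {set T}) : nat :=
  if [pick k | E k == A] is Some k then lab k else 0.

Lemma edge_labE k : edge_lab (E k) = lab k.
Proof.
rewrite /edge_lab; case: pickP => [k' /eqP /E_inj -> // | /(_ k)].
by rewrite eqxx.
Qed.

Lemma card_edges : #|edges e| = #|K|.
Proof. by rewrite edgesE card_imset. Qed.

Lemma edge_lab_labeling :
  injective lab -> (forall k, 0 < lab k <= #|K|) -> edge_labeling e edge_lab.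
Proof.
move=> lab_inj lab_range; split.
- move=> A B; rewrite edgesE => /imsetP [k _ ->] /imsetP [k' _ ->].
  by rewrite !edge_labE => /lab_inj ->.
- by move=> A; rewrite card_edges edgesE => /imsetP [k _ ->]; rewrite edge_labE.
Qed.

Lemma vsum_edge_lab v : vsum e edge_lab v = \sum_(k | v \in E k) lab k.
Proof.
rewrite /vsum edgesE big_imset_cond /=; last by move=> k k' _ _ /E_inj.
by apply: eq_bigr => k _; rewrite edge_labE.
Qed.

Lemma antimagic_of_indexing :
  injective lab -> (forall k, 0 < lab k <= #|K|) ->
  injective (fun v => \sum_(k | v \in E k) lab k) -> antimagic e.
Proof.
move=> lab_inj lab_range sum_inj; exists edge_lab; split.
  exact: edge_lab_labeling.
by move=> v w; rewrite !vsum_edge_lab => /sum_inj.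
Qed.

End EdgeIndexing.

Lemma ord2P (b : 'I_2) : b = ord0 \/ b = ord_max.
Proof. by case: b => [[|[|]]] // Hb; [left | right]; apply/val_inj. Qed.

Section CyclicOrdinal.

Variable m : nat.

Lemma cycle_relE (i j : 'I_m) : cycle_rel m i j = (j == ordS i) || (i == ordS j).
Proof. by []. Qed.

Lemma val_ordS (i : 'I_m) : ordS i = (if i.+1 == m then 0 else i.+1) :> nat.
Proof.
have := ltn_ord i; rewrite /=; case: eqP => [-> | ne] lt_im; first exact: modnn.
by rewrite modn_small //; lia.
Qed.

Lemma val_ord_pred (i : 'I_m) : ord_pred i = (if i == 0 :> nat then m.-1 else i.-1) :> nat.
Proof.
have := ltn_ord i; rewrite /=; case: eqP => [-> | /eqP i_neq0] lt_im.
  by rewrite add0n modn_small // ltn_predL.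
have -> : (i + m).-1 = i.-1 + m by lia.
by rewrite modnDr modn_small //; lia.
Qed.

Lemma ordS_eq_pred (i j : 'I_m) : (ordS j == i) = (j == ord_pred i).
Proof. exact: (can2_eq (@ordSK m) (@ord_predK m)). Qed.

Lemma ordS_neq (i : 'I_m) : 1 < m -> ordS i != i.
Proof.
move=> m_gt1; apply/eqP => /(congr1 (@nat_of_ord m)); rewrite val_ordS.
by have := ltn_ord i; case: eqP; lia.
Qed.

Lemma ordS2_neq (i : 'I_m) : 2 < m -> ordS (ordS i) != i.
Proof.
move=> m_gt2; apply/eqP => /(congr1 (@nat_of_ord m)); rewrite !val_ordS.
by have := ltn_ord i; do 2 case: eqP; lia.
Qed.

End CyclicOrdinal.

Section Prism.

Variable m : nat.

Local Notation vertex := ('I_m * 'I_2)%type.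
Local Notation index := ('I_2 * 'I_m + 'I_m)%type.

Definition prism := cart_prod (cycle_rel m) path2_rel.

Definition prism_edge (k : index) : {set vertex} :=
  match k with
  | inl (b, i) => [set (i, b); (ordS i, b)]
  | inr i => [set (i, ord0); (i, ord_max)]
  end.

Lemma edges_prism : edges prism = [set prism_edge k | k : index].
Proof.
apply/setP => A; rewrite inE; apply/existsP/imsetP.
- case=> -[i b] /existsP [[j c] /andP [adj_xy /eqP ->]].
  case/orP: adj_xy => /andP [/eqP /= eq_ij adj_xy]; first subst j.
    exists (inr i) => //=.
    by case: (ord2P b) adj_xy => ->; case: (ord2P c) => -> //= _; rewrite setUC.
  subst c; move: adj_xy; rewrite /= cycle_relE.
  case/orP => /eqP ->; first by exists (inl (b, i)).
  by exists (inl (b, j)); rewrite //= setUC.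
- case=> [[[b i] | i] _ ->].
    exists (i, b); apply/existsP; exists (ordS i, b).
    by rewrite eqxx andbT /prism /cart_prod /= eqxx cycle_relE eqxx orbT.
  exists (i, ord0); apply/existsP; exists (i, ord_max).
  by rewrite eqxx andbT /prism /cart_prod /= eqxx.
Qed.

Lemma prism_edge_inj : 2 < m -> injective prism_edge.
Proof.
move=> m_gt2; have S_neq i := negbTE (ordS_neq i (ltnW m_gt2)).
move=> [[b i] | i] [[c j] | j] /setP eqE.
- move: (eqE (i, b)) (eqE (ordS i, b)); rewrite !in_set2 !xpair_eqE !eqxx /= !andbT.
  case: (eqVneq b c) => [<- | _]; last by rewrite !andbF.
  rewrite !andbT (inj_eq (@ordS_inj m)); case: (eqVneq i j) => [-> // | _] /=.
  move=> /esym /eqP -> /esym.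
  by rewrite (inj_eq (@ordS_inj m)) S_neq (negbTE (ordS2_neq _ m_gt2)).
- move: (eqE (i, b)) (eqE (ordS i, b)); rewrite !in_set2 !xpair_eqE !eqxx /= !andbT.
  by case: (eqVneq i j) => [<- | _] /=; rewrite ?S_neq.
- move: (eqE (j, c)) (eqE (ordS j, c)); rewrite !in_set2 !xpair_eqE !eqxx /= !andbT.
  by case: (eqVneq j i) => [<- | _] /=; rewrite ?S_neq.
- by move: (eqE (i, ord0)); rewrite !in_set2 !xpair_eqE !eqxx /=; case: (eqVneq i j) => [-> |].
Qed.

Lemma mem_prism_edge (i : 'I_m) (b : 'I_2) k :
  ((i, b) \in prism_edge k) = (k \in [:: inl (b, i); inl (b, ord_pred i); inr i]).
Proof.
case: k => [[c j] | j]; rewrite !inE -!sum_eqE /= ?xpair_eqE.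
  rewrite (eq_sym c) (eq_sym j) -ordS_eq_pred (eq_sym (ordS j)) orbF.
  by rewrite ![_ && (b == c)]andbC.
by case: (ord2P b) => ->; rewrite (eq_sym j); case: (i == j).
Qed.

Lemma sum_prism_incident (F : index -> nat) (i : 'I_m) (b : 'I_2) : 1 < m ->
  \sum_(k | (i, b) \in prism_edge k) F k =
    F (inl (b, i)) + F (inl (b, ord_pred i)) + F (inr i).
Proof.
move=> m_gt1; rewrite (eq_bigl (mem [:: inl (b, i); inl (b, ord_pred i); inr i])).
  rewrite -big_uniq /=; first by rewrite !big_cons big_nil addn0 addnA.
  rewrite !inE -!sum_eqE /= xpair_eqE eqxx /= orbF andbT -ordS_eq_pred.
  exact: ordS_neq.
by move=> k; rewrite mem_prism_edge.
Qed.

Definition prism_lab (k : index) : nat :=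
  match k with
  | inl (b, i) => i.+1 + 2 * m * b
  | inr i => if i == 0 :> nat then m.+1 else 2 * m + 1 - i
  end.

Lemma prism_lab_inj : injective prism_lab.
Proof.
move=> [[b i] | i] [[c j] | j] /=; have := ltn_ord i; have := ltn_ord j.
- by case: (ord2P b) => ->; case: (ord2P c) => -> /= *;
    congr (inl (_, _)); apply: val_inj => /=; lia.
- by case: (ord2P b) => -> /=; case: eqP; lia.
- by case: (ord2P c) => -> /=; case: eqP; lia.
- by do 2 case: eqP => /=; move=> *; congr inr; apply: val_inj => /=; lia.
Qed.

Lemma prism_lab_range k : 0 < prism_lab k <= #|{: index}|.
Proof.
rewrite card_sum card_prod !card_ord.
case: k => [[b i] | i] /=; have := ltn_ord i.
  by case: (ord2P b) => -> /=; lia.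
by case: eqP; lia.
Qed.

Lemma prism_vertex_sum (i : 'I_m) (b : 'I_2) :
  prism_lab (inl (b, i)) + prism_lab (inl (b, ord_pred i)) + prism_lab (inr i) =
    2 * m + 2 + i + 4 * m * b.
Proof. by rewrite /prism_lab val_ord_pred; have := ltn_ord i; case: eqP; lia. Qed.

End Prism.

Theorem lemma4p2 (m : nat) (hm : 3 <= m) :
  antimagic (cart_prod (cycle_rel m) path2_rel).
Proof.
apply: (antimagic_of_indexing (prism_edge_inj hm) (edges_prism m)
          (@prism_lab_inj m) (@prism_lab_range m)).
move=> [i b] [j c]; rewrite !sum_prism_incident ?(ltnW hm) // !prism_vertex_sum.
have := ltn_ord i; have := ltn_ord j.
by case: (ord2P b) => ->; case: (ord2P c) => -> /= *; congr pair; apply: val_inj => /=; lia.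
Qed.
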